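(* Let $n\ge 1$, $A_0\in\mathbb{R}^{n\times n}$, $E_0\in\mathbb{R}^{n\times 1}$ and $C_0\in\mathbb{R}^{1\times n}$, and suppose the pair $(A_0,C_0)$ is observable. Then the following two statements are equivalent: (1) $\operatorname{rank}\begin{bmatrix} A_0-zI_n & E_0\\ C_0 & 0\end{bmatrix}=n+1$ for all $z\in\mathbb{C}$ (i.e., the triple $(A_0,E_0,C_0)$ has no invariant zeros); (2) $C_0E_0=0,\ C_0A_0E_0=0,\ \dots,\ C_0A_0^{n-2}E_0=0$ and $C_0A_0^{n-1}E_0\neq 0$.
   Context: These matrices describe the single-input single-output discrete-time system $x(k+1)=A_0x(k)+B_0u(k)+E_0f(k)$, $y(k)=C_0x(k)$, with state $x(k)\in\mathbb{R}^n$, known input $u(k)\in\mathbb{R}$, unknown scalar input (total disturbance) $f(k)\in\mathbb{R}$ and output $y(k)\in\mathbb{R}$. A number $z\in\mathbb{C}$ is an invariant zero of $(A_0,E_0,C_0)$ if $\operatorname{rank}\begin{bmatrix} A_0-zI_n & E_0\\ C_0 & 0\end{bmatrix}<n+1$. *)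

From HB Require Import structures.
From mathcomp Require Import all_boot all_order all_algebra.
From mathcomp Require Export complex.
Set Implicit Arguments. Unset Strict Implicit. Unset Printing Implicit Defensive.
Import Order.TTheory GRing.Theory Num.Theory.
Local Open Scope ring_scope.

Definition obs_mx (R : pzRingType) (n : nat) (A : 'M[R]_n) (C : 'M[R]_(1, n))
  : 'M[R]_(n, n) := \matrix_(i < n, j < n) (C *m A ^+ i) 0 j.

(* Kalman rank test: (A, C) observable iff the observability matrix has rank n. *)
Definition observable (R : fieldType) (n : nat) (A : 'M[R]_n) (C : 'M[R]_(1, n))
  : bool := \rank (obs_mx A C) == n.

Definition rosenbrock (R : rcfType) (n : nat) (A : 'M[R]_n) (E : 'M[R]_(n, 1))
  (C : 'M[R]_(1, n)) (z : R[i]) : 'M[R[i]]_(n + 1, n + 1) :=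
  block_mx (map_mx (real_complex R) A - z%:M) (map_mx (real_complex R) E)
           (map_mx (real_complex R) C) 0.

From HB Require Import structures.
From mathcomp Require Import all_boot all_order all_algebra.
From mathcomp Require Import perm complex zify.
Import Order.TTheory GRing.Theory Num.Theory.
Local Open Scope ring_scope.

(* Expanding the determinant along the border, det [A - zI, E; C, 0] = - q(z)
   with q := C adj(A - X) E, so (A, E, C) has no invariant zero iff the
   polynomial q has no complex root, i.e. iff q is a nonzero constant.
   Multiplying (A - X) adj(A - X) = det(A - X) by C A^m on the left and by E on
   the right gives r_(m+1) = X r_m + det(A - X) C A^m E for
   r_m := C A^m adj(A - X) E, where every r_m has degree < n and det(A - X) has
   degree n.  Hence deg q = n - 1 - m when C A^m E is the first nonzero Markov
   parameter, and q = 0 when C A^i E = 0 for all i < n. *)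

Lemma size_prod_leq_deg1 {R : nzRingType} {I : Type} (r : seq I)
    (F : I -> {poly R}) :
  (forall i, (size (F i) <= 2)%N) -> (size (\prod_(i <- r) F i)%R <= (size r).+1)%N.
Proof.
move=> F_le2; elim: r => [|i r IHr]; first by rewrite big_nil size_poly1.
rewrite big_cons (leq_trans (size_polyMleq _ _)) //=.
by move: (F_le2 i) IHr; case: (size (F i)) => //= k; lia.
Qed.

Lemma size_det_leq_deg1 (R : comNzRingType) m (M : 'M[{poly R}]_m) :
  (forall i j, (size (M i j) <= 2)%N) -> (size (\det M)%R <= m.+1)%N.
Proof.
move=> M_le2; apply: leq_trans (size_sum _ _ _) _; apply/bigmax_leqP => s _.
rewrite size_Msign.
apply: leq_trans (@size_prod_leq_deg1 _ _ _ _ (fun i => M_le2 i (s i))) _.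
by rewrite [index_enum _]unlock -enumT size_enum_ord.
Qed.

Lemma det_bordered (R : idomainType) n (M : 'M[R]_n) (E : 'M[R]_(n, 1))
    (C : 'M[R]_(1, n)) :
  \det M != 0 -> \det (block_mx M E C 0) = - (C *m \adj M *m E) 0 0.
Proof.
move=> detM_neq0.
have elim_C : block_mx 1%:M 0 (- (C *m \adj M)) (\det M)%:M *m block_mx M E C 0
    = block_mx M E 0 (- (C *m \adj M *m E)).
  rewrite mulmx_block !mul1mx !mul0mx !addr0 mulmx0 addr0 !mulNmx.
  by rewrite -[C *m _ *m M]mulmxA mul_adj_mx mul_mx_scalar mul_scalar_mx addNr.
move/(congr1 determinant): elim_C.
rewrite det_mulmx det_lblock det_ublock det1 mul1r det_scalar1 det_mx11 mxE.
exact: mulfI.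
Qed.

Lemma map_mxX (R S : nzRingType) (f : {rmorphism R -> S}) n (A : 'M[R]_n) k :
  map_mx f (A ^+ k) = map_mx f A ^+ k.
Proof.
by elim: k => [|k IHk]; rewrite ?expr0 ?map_mx1 // !exprS map_mxM IHk.
Qed.

Lemma mx11_eq0 (R : nmodType) (M : 'M[R]_1) : (M == 0) = (M 0 0 == 0).
Proof.
apply/eqP/eqP => [-> | M00]; first by rewrite mxE.
by apply/matrixP => i j; rewrite !ord1 M00 mxE.
Qed.

Section PolyCMulmx.

Context {R : comNzRingType} {p q r d : nat}.

Lemma size_polyC_mulmx_leq (U : 'M[R]_(p, q)) (M : 'M[{poly R}]_(q, r)) i j :
  (forall k l, (size (M k l) <= d)%N) ->
  (size ((map_mx polyC U *m M) i j) <= d)%N.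
Proof.
move=> M_le; rewrite mxE; apply: leq_trans (size_sum _ _ _) _.
apply/bigmax_leqP => k _; rewrite mxE mul_polyC.
exact: leq_trans (size_scale_leq _ _) _.
Qed.

Lemma size_mulmx_polyC_leq (M : 'M[{poly R}]_(p, q)) (V : 'M[R]_(q, r)) i j :
  (forall k l, (size (M k l) <= d)%N) ->
  (size ((M *m map_mx polyC V) i j) <= d)%N.
Proof.
move=> M_le; rewrite mxE; apply: leq_trans (size_sum _ _ _) _.
apply/bigmax_leqP => k _; rewrite mxE mulrC mul_polyC.
exact: leq_trans (size_scale_leq _ _) _.
Qed.

End PolyCMulmx.

Definition pencil {K : fieldType} {n} (A : 'M[K]_n) : 'M[{poly K}]_n :=
  map_mx polyC A - 'X%:M.

Definition markov {K : fieldType} {n} (A : 'M[K]_n) (E : 'M[K]_(n, 1))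
    (C : 'M[K]_(1, n)) m : K :=
  (C *m A ^+ m *m E) 0 0.

Definition transfer_num {K : fieldType} {n} (A : 'M[K]_n) (E : 'M[K]_(n, 1))
    (C : 'M[K]_(1, n)) m : {poly K} :=
  (map_mx polyC (C *m A ^+ m) *m \adj (pencil A) *m map_mx polyC E) 0 0.

Section TransferNumerator.

Context {K : fieldType} {n : nat} (A : 'M[K]_n) (E : 'M[K]_(n, 1))
  (C : 'M[K]_(1, n)).

Local Notation q := (transfer_num A E C 0).

Lemma size_det_pencil : size (\det (pencil A)) = n.+1.
Proof.
have -> : pencil A = (-1) *: char_poly_mx A by rewrite scaleN1r opprB.
by rewrite detZ size_Msign size_char_poly.
Qed.

Lemma det_pencil_neq0 : \det (pencil A) != 0.
Proof. by rewrite -size_poly_eq0 size_det_pencil. Qed.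

Lemma size_pencil i j : (size (pencil A i j) <= 2)%N.
Proof.
rewrite !mxE; apply: leq_trans (size_polyD _ _) _.
rewrite size_polyN size_polyC geq_max (leq_trans (leq_b1 _)) //.
by case: (i == j); rewrite ?mulr1n ?mulr0n ?size_polyX ?size_poly0.
Qed.

Lemma size_adj_pencil i j : (0 < n)%N -> (size (\adj (pencil A) i j) <= n)%N.
Proof.
move=> n_gt0; rewrite mxE size_Msign -[leqRHS](prednK n_gt0).
apply: size_det_leq_deg1 => k l.
by have := size_pencil (lift j k) (lift i l); rewrite !mxE.
Qed.

Lemma size_transfer_num m : (0 < n)%N -> (size (transfer_num A E C m) <= n)%N.
Proof.
move=> n_gt0; apply: size_mulmx_polyC_leq => i j.
by apply: size_polyC_mulmx_leq => k l; apply: size_adj_pencil.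
Qed.

Lemma transfer_numS m :
  transfer_num A E C m.+1 =
  'X * transfer_num A E C m + \det (pencil A) * (markov A E C m)%:P.
Proof.
set W := \adj (pencil A) *m map_mx polyC E.
have AW : map_mx polyC A *m W = 'X *: W + \det (pencil A) *: map_mx polyC E.
  have : pencil A *m W = \det (pencil A) *: map_mx polyC E.
    by rewrite mulmxA mul_mx_adj mul_scalar_mx.
  by rewrite mulmxBl mul_scalar_mx => <-; rewrite addrC subrK.
have -> : transfer_num A E C m.+1 =
    (map_mx polyC (C *m A ^+ m) *m (map_mx polyC A *m W)) 0 0.
  by rewrite /W /transfer_num exprSr mulmxA !map_mxM !mulmxA.
rewrite AW mulmxDr -!scalemxAr -map_mxM /transfer_num -mulmxA -/W.
by rewrite /markov !mxE.
Qed.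

Lemma transfer_num_markov0 m :
  (forall i, (i < m)%N -> markov A E C i = 0) ->
  transfer_num A E C m = 'X^m * q.
Proof.
elim: m => [|m IHm] markov0; first by rewrite expr0 mul1r.
rewrite transfer_numS markov0 // mulr0 addr0 IHm ?exprS ?mulrA //.
by move=> i /ltnW; apply: markov0.
Qed.

Lemma size_transfer_num_first_markov m : (0 < n)%N ->
  (forall i, (i < m)%N -> markov A E C i = 0) -> markov A E C m != 0 ->
  size q = (n - m)%N.
Proof.
move=> n_gt0 markov0 markov_m.
have size_Xq : size ('X^(m.+1) * q) = n.+1.
  rewrite exprS -mulrA -transfer_num_markov0 //.
  have -> : 'X * transfer_num A E C m =
      transfer_num A E C m.+1 - \det (pencil A) * (markov A E C m)%:P.
    by rewrite transfer_numS addrK.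
  rewrite addrC size_polyDl size_polyN mulrC size_Cmul // size_det_pencil //.
  by rewrite ltnS size_transfer_num.
have q_neq0 : q != 0 by apply: contra_eq_neq size_Xq => ->; rewrite mulr0 size_poly0.
by move: size_Xq; rewrite mulrC size_mulXn //; lia.
Qed.

Lemma transfer_num_eq0 : (0 < n)%N ->
  (forall i, (i < n)%N -> markov A E C i = 0) -> q = 0.
Proof.
move=> n_gt0 /transfer_num_markov0 rn.
apply: contraTeq (size_transfer_num n n_gt0) => q_neq0.
rewrite rn mulrC size_mulXn //; rewrite -size_poly_gt0 in q_neq0; lia.
Qed.

Lemma size_transfer_num_eq1 : (0 < n)%N ->
  size q = 1%N <->
  (forall k, (k < n - 1)%N -> markov A E C k = 0) /\ markov A E C (n - 1) != 0.
Proof.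
move=> n_gt0; split => [q1 | [markov0 markov_last]]; last first.
  by rewrite (size_transfer_num_first_markov _ n_gt0 markov0 markov_last); lia.
have markov0 k : (k <= n - 1)%N -> forall i, (i < k)%N -> markov A E C i = 0.
  elim: k => [//|k IHk] le_kn i; rewrite ltnS leq_eqVlt => /predU1P[-> | ]; last first.
    exact: IHk (ltnW le_kn) i.
  apply/eqP; apply: contra_eqT q1 => markov_k.
  by rewrite (size_transfer_num_first_markov _ n_gt0 (IHk (ltnW le_kn)) markov_k); lia.
split; first exact: markov0.
apply: contra_eq_neq q1 => markov_last; rewrite transfer_num_eq0 ?size_poly0 //.
move=> i lt_in; have [-> //|ne_i] := eqVneq i (n - 1)%N.
by apply: (markov0 (n - 1)%N) => //; lia.
Qed.

Lemma bordered_eval z :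
  block_mx (A - z%:M) E C 0 =
  map_mx (horner_eval z) (block_mx (pencil A) (map_mx polyC E) (map_mx polyC C) 0).
Proof.
have evalC p' q' (M : 'M[K]_(p', q')) : map_mx (horner_eval z) (map_mx polyC M) = M.
  by apply/matrixP => i j; rewrite !mxE horner_evalE hornerC.
rewrite map_block_mx map_mx0 /pencil map_mxB map_scalar_mx !evalC.
by rewrite /= horner_evalE hornerX.
Qed.

Lemma rank_bordered_full z :
  (\rank (block_mx (A - z%:M) E C 0) == (n + 1)%N) = (q.[z] != 0).
Proof.
rewrite -[_ == _]/(row_free _) row_free_unit unitmxE unitfE bordered_eval.
rewrite det_map_mx det_bordered ?det_pencil_neq0 // rmorphN oppr_eq0.
by rewrite /transfer_num expr0 mulmx1.
Qed.

End TransferNumerator.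

Lemma rank_bordered_full_everywhere {K : closedFieldType} {n} (A : 'M[K]_n)
    (E : 'M[K]_(n, 1)) (C : 'M[K]_(1, n)) :
  (forall z, \rank (block_mx (A - z%:M) E C 0) = (n + 1)%N) <->
  size (transfer_num A E C 0) = 1%N.
Proof.
split => [full | q1 z]; last first.
  apply/eqP; rewrite rank_bordered_full; apply: contra_eqN q1 => /eqP qz.
  by apply/closed_rootP; exists z; apply/rootP.
apply/eqP; apply: contraT => /closed_rootP[z /rootP qz].
by move/eqP: (full z); rewrite rank_bordered_full qz eqxx.
Qed.

Theorem lemma1 (R : rcfType) (n : nat) (A0 : 'M[R]_n) (E0 : 'M[R]_(n, 1))
  (C0 : 'M[R]_(1, n)) :
  (0 < n)%N -> observable A0 C0 ->
  ((forall z : R[i], \rank (rosenbrock A0 E0 C0 z) = (n + 1)%N) <->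
   ((forall k : nat, (k < n - 1)%N -> C0 *m A0 ^+ k *m E0 = 0) /\
    C0 *m A0 ^+ (n - 1) *m E0 != 0)).
Proof.
move=> n_gt0 _; set f := real_complex R.
have markovE k : (markov (map_mx f A0) (map_mx f E0) (map_mx f C0) k == 0)
    = (C0 *m A0 ^+ k *m E0 == 0).
  by rewrite /markov -map_mxX -!map_mxM -mx11_eq0 map_mx_eq0.
apply: iff_trans (rank_bordered_full_everywhere _ _ _) _.
apply: iff_trans (size_transfer_num_eq1 _ _ _ n_gt0) _.
split=> -[markov0 markov_last]; split.
- by move=> k /markov0 /eqP; rewrite markovE => /eqP.
- by rewrite -markovE.
- by move=> k /markov0 /eqP; rewrite -markovE => /eqP.
- by rewrite markovE.
Qed.
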